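(* Let $p=p_1p_2\cdots p_n$ be a permutation avoiding the pattern $1324$, and let $w(p)$ and $z(p)$ be the two words of length $n$ over $\{A,B,C,D\}$ defined in the context. Then for all $i\geq 1$ and all $k\geq 1$: if the $i$th letter $A$ from the right in $w(p)$ is in the middle of a $CAB^k$-factor (i.e., it is immediately preceded by a letter $C$ and immediately followed by $k$ consecutive letters $B$), then the $i$th segment of $z(p)$ from the left contains at least $k$ letters $B$.
   Context: A permutation $p$ avoids $1324$ if there are no indices $i_1<i_2<i_3<i_4$ with $p_{i_1}<p_{i_3}<p_{i_2}<p_{i_4}$. An entry $p_i$ is a left-to-right minimum if it is smaller than all entries to its left, and a right-to-left maximum if it is larger than all entries to its right (these notions are also applied to subsequences). Coloring: scan $p$ from left to right; color $p_i$ blue if coloring it red would create a $132$-pattern consisting entirely of red entries (among the previously colored red entries together with $p_i$); otherwise color $p_i$ red. Then mark each entry with a letter: (1) a red entry that is a left-to-right minimum of the subsequence of red entries gets $A$; (2) a red entry that is not such a left-to-right minimum gets $B$; (3) a blue entry that is not a right-to-left maximum of the subsequence of blue entries gets $C$; (4) a blue entry that is a right-to-left maximum of the subsequence of blue entries gets $D$; (4') finally, every entry that is a right-to-left maximum of all of $p$ but not a left-to-right minimum of $p$ is colored blue and marked $D$, regardless of the earlier rules. The word $w(p)$ has as its $i$th letter the letter of $p_i$; the word $z(p)$ has as its $i$th letter the letter of the entry of value $i$. A segment of a word $v$ over $\{A,B,C,D\}$ is a factor (consecutive letters) that starts with a letter $A$ and ends immediately before the next letter $A$, or at the end of $v$.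 The $i$th segment from the left is the one starting at the $i$th letter $A$ from the left. *)

(* Permutations are sequences of naturals that are
   rearrangements of 1..n; positions are 0-indexed internally. *)
From HB Require Import structures.
From mathcomp Require Import all_boot.
Set Implicit Arguments. Unset Strict Implicit. Unset Printing Implicit Defensive.

Inductive letter := LA | LB | LC | LD.

Definition letter_eqb (x y : letter) : bool :=
  match x, y with
  | LA, LA | LB, LB | LC, LC | LD, LD => true
  | _, _ => false
  end.

Lemma letter_eqP : Equality.axiom letter_eqb.
Proof. by case; case; constructor. Qed.

HB.instance Definition _ := hasDecEq.Build letter letter_eqP.

Definition is_perm (p : seq nat) : bool := perm_eq p (iota 1 (size p)).

Definition avoids1324 (p : seq nat) : bool :=
  ~~ [exists i1 : 'I_(size p), exists i2 : 'I_(size p),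
      exists i3 : 'I_(size p), exists i4 : 'I_(size p),
      [&& (i1 < i2)%N, (i2 < i3)%N, (i3 < i4)%N,
          (nth 0 p i1 < nth 0 p i3)%N, (nth 0 p i3 < nth 0 p i2)%N
        & (nth 0 p i2 < nth 0 p i4)%N]].

Definition has132 (s : seq nat) : bool :=
  [exists a : 'I_(size s), exists b : 'I_(size s), exists c : 'I_(size s),
    [&& (a < b)%N, (b < c)%N, (nth 0 s a < nth 0 s c)%N
      & (nth 0 s c < nth 0 s b)%N]].

(* left-to-right scan: reds = previously red-coloured entries (in order);
   returns true for red, false for blue *)
Fixpoint color_aux (reds rest : seq nat) : seq bool :=
  match rest with
  | [::] => [::]
  | x :: r => if has132 (rcons reds x) then false :: color_aux reds r
              else true :: color_aux (rcons reds x) r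
  end.

Definition colors (p : seq nat) : seq bool := color_aux [::] p.

Definition is_red (p : seq nat) (i : nat) : bool := nth false (colors p) i.

Definition lr_min (p : seq nat) (i : nat) : bool :=
  [forall j : 'I_(size p), (j < i)%N ==> (nth 0 p i < nth 0 p j)%N].

Definition rl_max (p : seq nat) (i : nat) : bool :=
  [forall j : 'I_(size p), (i < j)%N ==> (nth 0 p j < nth 0 p i)%N].

Definition red_lr_min (p : seq nat) (i : nat) : bool :=
  [forall j : 'I_(size p), ((j < i)%N && is_red p j) ==> (nth 0 p i < nth 0 p j)%N].

Definition blue_rl_max (p : seq nat) (i : nat) : bool :=
  [forall j : 'I_(size p), ((i < j)%N && ~~ is_red p j) ==> (nth 0 p j < nth 0 p i)%N].

(* the letter of the entry at position i; rule (4') overrides rules (1)-(4) *)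
Definition letter_at (p : seq nat) (i : nat) : letter :=
  if rl_max p i && ~~ lr_min p i then LD
  else if is_red p i then (if red_lr_min p i then LA else LB)
  else (if blue_rl_max p i then LD else LC).

Definition wword (p : seq nat) : seq letter := mkseq (letter_at p) (size p).

Definition zword (p : seq nat) : seq letter :=
  mkseq (fun v => letter_at p (index v.+1 p)) (size p).

Definition A_positions (v : seq letter) : seq nat :=
  [seq j <- iota 0 (size v) | nth LA v j == LA].

(* the i-th segment from the left (i >= 1) of v: from the i-th A up to
   (not including) the next A, or to the end of v *)
Definition segment (v : seq letter) (i : nat) : seq letter :=
  let s := nth 0 (A_positions v) i.-1 in
  let e := if (i < size (A_positions v))%N then nth 0 (A_positions v) i
           else size v in
  drop s (take e v).

From mathcomp Require Import all_boot zify.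
Set Implicit Arguments. Unset Strict Implicit. Unset Printing Implicit Defensive.

(* The letters A of w(p) mark the left-to-right minima of p and those of z(p) mark
   their values; as left-to-right minima decrease, the i-th A from the right in w(p)
   is the entry x whose value opens the i-th segment of z(p), and this segment ends
   just before the value of the preceding left-to-right minimum, the least earlier
   one.  The k entries coded B after x are red and are not left-to-right minima, so
   they exceed x.  They are also below every earlier left-to-right minimum u: the
   entry c coded C just before x is blue, so some later blue d exceeds c, and d lies
   beyond the red run.  A red entry y after the blue c is smaller than c (otherwise
   y lies between the two reds that make c blue, or forms 1324 with them); if u < c
   as well, then u < y would give the pattern u c y d of type 1324. *)

Lemma A_positions_sorted v : sorted ltn (A_positions v).
Proof. exact/sorted_filter/iota_ltn_sorted/ltn_trans. Qed.

Lemma count_drop_take_ge (T : Type) (x0 : T) (P : pred T) (v : seq T) s e (S : seq nat) :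
  e <= size v -> uniq S -> (forall q, q \in S -> s <= q < e /\ P (nth x0 v q)) ->
  size S <= count P (drop s (take e v)).
Proof.
move=> ev S_uniq S_in.
have -> : drop s (take e v) = [seq nth x0 v q | q <- iota s (e - s)].
  rewrite -{1}(mkseq_nth x0 v) /mkseq -map_take -map_drop take_iota drop_iota.
  by rewrite (minn_idPl ev).
rewrite count_map -size_filter; apply: uniq_leq_size S_uniq _ => q /S_in[q_in Pq].
by rewrite mem_filter /= Pq mem_iota; lia.
Qed.

Lemma CAB_factor_letters (v : seq letter) m k : 0 < m ->
  drop m.-1 (take (m + k).+1 v) = LC :: LA :: nseq k LB ->
  [/\ m + k < size v, nth LA v m.-1 = LC & forall t, m < t <= m + k -> nth LA v t = LB].
Proof.
move=> m_pos factor.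
have mk_lt : m + k < size v.
  have := congr1 size factor; rewrite size_drop size_take /= size_nseq; case: ifP; lia.
have nth_factor q : q <= k.+1 -> nth LA v (m.-1 + q) = nth LA (LC :: LA :: nseq k LB) q.
  by move=> qk; rewrite -factor nth_drop nth_take //; lia.
split => //; first by have := nth_factor 0 (leq0n _); rewrite addn0.
move=> t t_in; have t_eq : t = m.-1 + (t - m.+1).+2 by lia.
by rewrite t_eq nth_factor /= ?nth_nseq; [case: ifP => //; lia | lia].
Qed.

Lemma has132P s : reflect (exists a b c, [/\ a < b, b < c, c < size s,
   nth 0 s a < nth 0 s c & nth 0 s c < nth 0 s b]) (has132 s).
Proof.
apply: (iffP existsP).
  case=> a /existsP[b /existsP[c /and4P[ab bc ac cb]]].
  by exists a, b, c; split.
case=> a [b [c [ab bc cs ac cb]]].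
have [as_ bs] : a < size s /\ b < size s by lia.
exists (Ordinal as_); apply/existsP; exists (Ordinal bs); apply/existsP.
by exists (Ordinal cs); apply/and4P.
Qed.

Lemma has132_rcons s x a b : a < b -> b < size s ->
  nth 0 s a < x -> x < nth 0 s b -> has132 (rcons s x).
Proof.
move=> ab bs ax xb; apply/has132P; exists a, b, (size s).
by rewrite size_rcons !nth_rcons ltnn eqxx (ltn_trans ab bs) bs.
Qed.

Lemma has132_rcons_between s x : ~~ has132 s -> has132 (rcons s x) ->
  exists a b, [/\ a < b, b < size s, nth 0 s a < x & x < nth 0 s b].
Proof.
move=> s_free /has132P[a [b [c [ab bc cs ac cb]]]].
rewrite size_rcons in cs; rewrite !nth_rcons in ac cb.
have [as_ bs] : a < size s /\ b < size s by lia.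
rewrite as_ bs in ac cb.
case: (ltnP c (size s)) => [cs' | sc].
  by rewrite cs' in ac cb; case/negP: s_free; apply/has132P; exists a, b, c.
have c_eq : c = size s by lia.
by rewrite c_eq ltnn eqxx in ac cb; exists a, b.
Qed.

Lemma size_color_aux reds rest : size (color_aux reds rest) = size rest.
Proof. by elim: rest reds => [|x r IH] reds //=; case: has132 => /=; rewrite IH. Qed.

Lemma nth_color_aux reds rest i : i < size rest ->
  nth false (color_aux reds rest) i =
  ~~ has132 (rcons (reds ++ [seq nth 0 rest t | t <- iota 0 i &
                          nth false (color_aux reds rest) t]) (nth 0 rest i)).
Proof.
elim: rest reds i => [|x r IH] reds [|i] //= i_lt; first by rewrite cats0; case: has132.
have shift c b : [seq nth 0 (x :: r) t | t <- iota 1 i & nth false (b :: c) t] =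
                 [seq nth 0 r t | t <- iota 0 i & nth false c t].
  by rewrite -[1]/(1 + 0) iotaDl filter_map -map_comp.
by case: has132 => /=; rewrite shift IH // cat_rcons.
Qed.

Section Coloring.

Variable p : seq nat.

Definition red_positions j := [seq t <- iota 0 j | is_red p t].

Definition red_prefix j := [seq nth 0 p t | t <- red_positions j].

Lemma is_redE j : j < size p -> is_red p j = ~~ has132 (rcons (red_prefix j) (nth 0 p j)).
Proof. by move=> jp; rewrite /is_red /colors nth_color_aux. Qed.

Lemma is_red_lt_size j : is_red p j -> j < size p.
Proof.
rewrite /is_red /colors; case: ltnP => // pj.
by rewrite nth_default // size_color_aux.
Qed.

Lemma red_prefix_132free j : ~~ has132 (red_prefix j).
Proof.
elim: j => [|j IH]; first by apply/has132P => -[a [b [c [_ _ ]]]].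
rewrite /red_prefix /red_positions -addn1 iotaD filter_cat map_cat /=.
case red_j: (is_red p j) => /=; last by rewrite cats0.
by rewrite cats1 -is_redE // is_red_lt_size.
Qed.

Lemma red_positions_sorted j : sorted ltn (red_positions j).
Proof. exact/sorted_filter/iota_ltn_sorted/ltn_trans. Qed.

Lemma mem_red_positions j t : (t \in red_positions j) = is_red p t && (t < j).
Proof. by rewrite mem_filter mem_iota. Qed.

Lemma blue_between_reds j : j < size p -> ~~ is_red p j ->
  exists a b, [/\ a < b, b < j, is_red p a, is_red p b &
    nth 0 p a < nth 0 p j < nth 0 p b].
Proof.
move=> jp; rewrite is_redE // negbK => /(has132_rcons_between (red_prefix_132free j)).
rewrite /red_prefix size_map; set s := red_positions j.
case=> a [b [ab bs]]; rewrite !(nth_map 0) ?(ltn_trans ab bs) // => ax xb.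
have: nth 0 s a \in s by rewrite mem_nth ?(ltn_trans ab bs).
have: nth 0 s b \in s by rewrite mem_nth.
rewrite !mem_red_positions => /andP[rb bj] /andP[ra _].
exists (nth 0 s a), (nth 0 s b); split; rewrite ?ax //.
by apply: (sorted_ltn_nth ltn_trans 0 (red_positions_sorted j));
  rewrite ?inE ?(ltn_trans ab bs).
Qed.

Lemma red_not_between_reds j a b : is_red p j -> a < b -> b < j ->
  is_red p a -> is_red p b -> ~~ (nth 0 p a < nth 0 p j < nth 0 p b).
Proof.
move=> rj ab bj ra rb; apply/negP => /andP[aj jb].
have jp := is_red_lt_size rj; move: rj; rewrite is_redE // => /negP; apply.
set s := red_positions j.
have [sa sb] : a \in s /\ b \in s by rewrite !mem_red_positions ra rb bj (ltn_trans ab bj).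
have lt_index : index a s < index b s.
  have s_leq : sorted leq s by apply/sorted_filter/iota_sorted/leq_trans.
  rewrite ltnNge; apply/negP => /(sorted_leq_index leq_trans leqnn s_leq b a sb sa).
  by rewrite leqNgt ab.
by apply: (has132_rcons lt_index);
  rewrite /red_prefix -/s ?size_map ?index_mem // (nth_map 0) ?index_mem ?nth_index.
Qed.

End Coloring.

Section LeftToRightMinima.

Variable p : seq nat.

Lemma lr_min_lt i t : lr_min p i -> t < i -> i < size p -> nth 0 p i < nth 0 p t.
Proof.
by move=> /forallP i_min ti ip; have := i_min (Ordinal (ltn_trans ti ip)); rewrite /= ti.
Qed.

Lemma lr_minI i : (forall t, t < i -> nth 0 p i < nth 0 p t) -> lr_min p i.
Proof. by move=> i_min; apply/forallP => t; apply/implyP/i_min. Qed.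

Lemma not_lr_min i : ~~ lr_min p i -> exists2 t, t < i & nth 0 p t <= nth 0 p i.
Proof. by move=> /forallPn[t]; rewrite negb_imply -leqNgt => /andP[]; exists t. Qed.

Lemma lr_min_is_red i : i < size p -> lr_min p i -> is_red p i.
Proof.
move=> ip i_min; apply/negPn/negP => /(blue_between_reds ip)[a [b [ab bi _ _ /andP[ai _]]]].
by have := lr_min_lt i_min (ltn_trans ab bi) ip; rewrite ltnNge ltnW.
Qed.

Lemma red_lr_min_is_lr_min i : i < size p -> is_red p i -> red_lr_min p i -> lr_min p i.
Proof.
move=> ip _ /forallP red_min; apply: lr_minI => t ti.
have tp := ltn_trans ti ip.
case red_t: (is_red p t); first by have := red_min (Ordinal tp); rewrite /= ti red_t.
have [a [b [ab bt ra _ /andP[a_t _]]]] := blue_between_reds tp (negbT red_t).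
have := red_min (Ordinal (ltn_trans (ltn_trans ab bt) tp)); rewrite /= ra andbT.
by rewrite (ltn_trans (ltn_trans ab bt) ti) /= => /ltn_trans; apply.
Qed.

Lemma letter_at_A i : i < size p -> (letter_at p i == LA) = lr_min p i.
Proof.
move=> ip; rewrite /letter_at.
case i_min: (lr_min p i).
  rewrite andbF lr_min_is_red //; suff -> : red_lr_min p i by [].
  by apply/forallP => t; apply/implyP => /andP[ti _]; apply: lr_min_lt.
case: (rl_max p i) => //=; case red_i: (is_red p i); last by case: blue_rl_max.
by case red_min: (red_lr_min p i) => //; rewrite -i_min red_lr_min_is_lr_min.
Qed.

Lemma letter_at_B i : i < size p -> letter_at p i = LB -> is_red p i /\ ~~ lr_min p i.
Proof.
move=> ip Bi; rewrite -letter_at_A // Bi; split => //; move: Bi; rewrite /letter_at.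
by case: (_ && _) => //; case: (is_red p i) => //; case: blue_rl_max.
Qed.

Lemma size_wword : size (wword p) = size p.
Proof. exact: size_mkseq. Qed.

Lemma nth_wword t : t < size p -> nth LA (wword p) t = letter_at p t.
Proof. exact: nth_mkseq. Qed.

Lemma mem_A_positions_wword t :
  (t \in A_positions (wword p)) = (t < size p) && lr_min p t.
Proof.
rewrite mem_filter mem_iota size_wword /= andbC.
by case: (ltnP t (size p)) => // tp; rewrite nth_wword // letter_at_A.
Qed.

End LeftToRightMinima.

Section Permutation.

Variable p : seq nat.
Hypothesis p_perm : is_perm p.

Lemma is_perm_uniq : uniq p.
Proof. by rewrite (perm_uniq p_perm) iota_uniq. Qed.

Lemma is_perm_mem v : (v \in p) = (0 < v <= size p).
Proof. by rewrite (perm_mem p_perm) mem_iota; lia. Qed.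

Lemma is_perm_nth t : t < size p -> 0 < nth 0 p t <= size p.
Proof. by move=> tp; rewrite -is_perm_mem mem_nth. Qed.

Lemma is_perm_nth_inj a b : a < size p -> b < size p -> nth 0 p a = nth 0 p b -> a = b.
Proof. by move=> ap bp /eqP; rewrite nth_uniq ?is_perm_uniq // => /eqP. Qed.

Lemma is_perm_nth_neq a b : a < size p -> b < size p -> a != b -> nth 0 p a != nth 0 p b.
Proof. by move=> ap bp; apply: contra => /eqP /(is_perm_nth_inj ap bp) ->. Qed.

Lemma index_nth_perm t : t < size p -> index (nth 0 p t) p = t.
Proof. by move=> tp; rewrite index_uniq ?is_perm_uniq. Qed.

Lemma letter_at_C i : i < size p -> letter_at p i = LC ->
  ~~ is_red p i /\ exists d, [/\ i < d, d < size p, ~~ is_red p d & nth 0 p i < nth 0 p d].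
Proof.
move=> ip; rewrite /letter_at; case: (_ && _) => //.
case: (is_red p i); first by case: red_lr_min.
case: (boolP (blue_rl_max p i)) => // /forallPn[d]; rewrite negb_imply -leqNgt.
move=> /andP[/andP[id bd] di] _; split => //; exists d; split => //.
by rewrite ltn_neqAle di is_perm_nth_neq // neq_ltn id.
Qed.

Lemma lr_min_lt_gap a t : lr_min p a -> a < t -> t < size p ->
  (forall s, a < s <= t -> ~~ lr_min p s) -> nth 0 p a < nth 0 p t.
Proof.
move=> a_min; elim: t {-2}t (leqnn t) => [|n IH] t tn a_t tp gap; first lia.
have [s st s_le] := not_lr_min (gap t (ltac:(lia))).
have ap := ltn_trans a_t tp.
case: (ltngtP s a) => [sa | as_ | sa].
- exact: leq_trans (lr_min_lt a_min sa ap) s_le.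
- apply: leq_trans s_le.
  exact: IH s (ltac:(lia)) as_ (ltn_trans st tp) (fun r r_in => gap r (ltac:(lia))).
- by move: s_le; rewrite sa ltn_neqAle => ->; rewrite is_perm_nth_neq // neq_ltn a_t.
Qed.

Lemma nth_zword t : t < size p -> nth LA (zword p) (nth 0 p t).-1 = letter_at p t.
Proof.
move=> tp; have /andP[pos le] := is_perm_nth tp.
by rewrite nth_mkseq ?prednK ?index_nth_perm //; lia.
Qed.

Lemma A_positions_zword :
  A_positions (zword p) = [seq (nth 0 p t).-1 | t <- rev (A_positions (wword p))].
Proof.
apply: (irr_sorted_eq ltn_trans ltnn (A_positions_sorted _)).
  rewrite map_rev rev_sorted sorted_map.
  apply: (sub_in_sorted (P := [pred t | t \in A_positions (wword p)]) _ _
           (A_positions_sorted _)); last exact/allP.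
  move=> a b; rewrite !inE !mem_A_positions_wword => /andP[ap _] /andP[bp b_min] ab /=.
  have := lr_min_lt b_min ab bp; have := is_perm_nth ap; have := is_perm_nth bp; lia.
move=> v; rewrite mem_filter mem_iota size_mkseq /=; apply/andP/mapP.
  case=> /eqP A_v vp.
  have v_in : v.+1 \in p by rewrite is_perm_mem; lia.
  have ip : index v.+1 p < size p by rewrite index_mem.
  have v_eq : v = (nth 0 p (index v.+1 p)).-1 by rewrite nth_index.
  exists (index v.+1 p) => //.
  by rewrite mem_rev mem_A_positions_wword ip -letter_at_A // -nth_zword // -v_eq A_v.
case=> t; rewrite mem_rev mem_A_positions_wword => /andP[tp t_min] ->.
rewrite nth_zword // letter_at_A //; split => //.
by have := is_perm_nth tp; lia.
Qed.

Lemma count_segment_zword i m (P : pred letter) (T : seq nat) :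
  0 < i <= size (A_positions (wword p)) ->
  m = nth 0 (rev (A_positions (wword p))) i.-1 -> uniq T ->
  (forall t, t \in T -> [/\ t < size p, nth 0 p m <= nth 0 p t,
     forall u, lr_min p u -> u < m -> nth 0 p t < nth 0 p u & P (letter_at p t)]) ->
  size T <= count P (segment (zword p) i).
Proof.
move=> /andP[i_pos iL] m_def T_uniq T_in.
set R := rev (A_positions (wword p)) in m_def *.
have mem_R t : (t \in R) = (t < size p) && lr_min p t.
  by rewrite mem_rev mem_A_positions_wword.
have R_size : size R = size (A_positions (wword p)) by rewrite size_rev.
have R_decr : sorted (fun x y => y < x) R by rewrite rev_sorted; apply: A_positions_sorted.
have size_zword : size (zword p) = size p by rewrite size_mkseq.
have lt_pred a b : 0 < a -> a < b -> a.-1 < b.-1 by lia.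
rewrite /segment A_positions_zword -/R size_map (nth_map 0) -?m_def; last lia.
rewrite -(size_map (fun t => (nth 0 p t).-1)).
apply: (@count_drop_take_ge letter LA P (zword p)).
- rewrite size_zword; case: ifP => // iR.
  have : nth 0 R i \in R by rewrite mem_nth.
  rewrite (nth_map 0) // mem_R => /andP[/is_perm_nth]; lia.
- rewrite map_inj_in_uniq // => a b /T_in[ap _ _ _] /T_in[bp _ _ _] ab_eq.
  by apply: is_perm_nth_inj => //; have := is_perm_nth ap; have := is_perm_nth bp; lia.
move=> _ /mapP[t /T_in[tp m_le below Pt] ->]; rewrite nth_zword //; split => //.
have t_pos : 0 < nth 0 p t by case/andP: (is_perm_nth tp).
apply/andP; split; first by rewrite -!subn1 leq_sub2r.
case: ifP => [iR | _]; last by rewrite size_zword; have := is_perm_nth tp; lia.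
have : nth 0 R i \in R by rewrite mem_nth.
rewrite (nth_map 0) // mem_R => /andP[_ u_min].
apply/lt_pred/below => //; rewrite m_def.
apply: (sorted_ltn_nth (fun _ _ _ yx zy => ltn_trans zy yx) 0 R_decr); rewrite ?inE; lia.
Qed.

Section Avoidance.

Hypothesis p_avoids : avoids1324 p.

Lemma avoids1324_pattern i1 i2 i3 i4 : i1 < i2 -> i2 < i3 -> i3 < i4 -> i4 < size p ->
  nth 0 p i1 < nth 0 p i3 -> nth 0 p i3 < nth 0 p i2 -> nth 0 p i2 < nth 0 p i4 -> False.
Proof.
move=> i12 i23 i34 i4p v13 v32 v24; move/negP: p_avoids; apply.
have [i1p i2p i3p] : [/\ i1 < size p, i2 < size p & i3 < size p] by split; lia.
apply/existsP; exists (Ordinal i1p); apply/existsP; exists (Ordinal i2p).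
apply/existsP; exists (Ordinal i3p); apply/existsP; exists (Ordinal i4p).
by apply/and5P; split => //; apply/andP.
Qed.

Lemma red_lt_earlier_blue c y : ~~ is_red p c -> is_red p y -> c < y -> y < size p ->
  nth 0 p y < nth 0 p c.
Proof.
move=> c_blue y_red cy yp; have cp := ltn_trans cy yp.
have [a [b [ab bc a_red b_red /andP[ac cb]]]] := blue_between_reds cp c_blue.
rewrite ltn_neqAle is_perm_nth_neq ?(gtn_eqF cy) //= leqNgt; apply/negP => c_lt_y.
have b_ne_y : nth 0 p b != nth 0 p y.
  by rewrite is_perm_nth_neq ?(ltn_eqF (ltn_trans bc cy)) //; lia.
case: (ltnP (nth 0 p y) (nth 0 p b)) => [yb | by_].
  have := red_not_between_reds y_red ab (ltn_trans bc cy) a_red b_red.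
  by rewrite (ltn_trans ac c_lt_y) yb.
by apply: (avoids1324_pattern ab bc cy yp) => //; rewrite ltn_neqAle b_ne_y.
Qed.

Lemma red_run_after_C_lt_lr_min c y u : letter_at p c = LC -> c < y -> y < size p ->
  (forall t, c < t <= y -> is_red p t) -> lr_min p u -> u <= c ->
  nth 0 p y < nth 0 p u.
Proof.
move=> C_c cy yp red_run u_min uc.
have cp := ltn_trans cy yp; have up := leq_ltn_trans uc cp.
have [c_blue [d [cd dp d_blue cd_lt]]] := letter_at_C cp C_c.
have yd : y < d by rewrite ltnNge; apply: contra d_blue => dy; apply: red_run; lia.
have y_lt_c := red_lt_earlier_blue c_blue (red_run y (ltac:(lia))) cy yp.
have u_lt_c : u < c.
  by rewrite ltn_neqAle uc andbT; apply: contraTneq u_min => ->; rewrite -letter_at_A ?C_c.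
case: (ltnP (nth 0 p u) (nth 0 p c)) => [uc_lt | cu_le]; last exact: leq_trans y_lt_c cu_le.
rewrite ltnNge leq_eqVlt negb_or is_perm_nth_neq ?(ltn_eqF (ltn_trans u_lt_c cy)) //=.
apply/negP => u_lt_y.
exact: (avoids1324_pattern u_lt_c cy yd dp u_lt_y y_lt_c cd_lt).
Qed.

End Avoidance.

End Permutation.

Theorem lemma4p1 (p : seq nat) (i k : nat) :
  is_perm p -> avoids1324 p ->
  (1 <= i)%N -> (1 <= k)%N ->
  (i <= size (A_positions (wword p)))%N ->
  let m := nth 0 (rev (A_positions (wword p))) i.-1 in
  (0 < m)%N ->
  drop m.-1 (take (m + k).+1 (wword p)) = LC :: LA :: nseq k LB ->
  (i <= size (A_positions (zword p)))%N /\
  (k <= count_mem LB (segment (zword p) i))%N.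
Proof.
move=> p_perm p_avoids i_pos _ iL m m_pos w_factor.
split; first by rewrite A_positions_zword // size_map size_rev.
have [] := CAB_factor_letters m_pos w_factor; rewrite size_wword => mk_lt w_C w_B.
have m_min : lr_min p m.
  have : m \in rev (A_positions (wword p)).
    by rewrite /m mem_nth // size_rev (leq_trans _ iL) ?ltn_predL.
  by rewrite mem_rev mem_A_positions_wword => /andP[].
have C_at : letter_at p m.-1 = LC by rewrite -nth_wword //; lia.
have B_at t : m < t <= m + k -> letter_at p t = LB.
  by move=> t_in; rewrite -nth_wword ?w_B //; lia.
have B_red_not_min t : m < t <= m + k -> is_red p t /\ ~~ lr_min p t.
  by move=> t_in; apply: letter_at_B (B_at t t_in); lia.
have red_run t : m.-1 < t <= m + k -> is_red p t.
  move=> t_in; case: (ltngtP t m) => [| mt | ->]; first lia.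
    by case: (B_red_not_min t) => //; lia.
  by apply: lr_min_is_red; lia.
rewrite -(size_iota m.+1 k); apply: count_segment_zword (iota_uniq _ _) _ => //.
  by rewrite i_pos.
move=> t; rewrite mem_iota => t_in; have tp : t < size p by lia.
split => //.
- apply/ltnW/lr_min_lt_gap => // [| s s_in]; first lia.
  by case: (B_red_not_min s) => //; lia.
- move=> u u_min um; apply: (red_run_after_C_lt_lr_min p_perm p_avoids C_at) => //.
  + lia.
  + by move=> s s_in; apply: red_run; lia.
  + lia.
- by rewrite /= B_at.
Qed.
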